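(* Every chain complex $\mathcal{A}$ over $\mathbb{F}_2$ has a lift to some chain complex $\tilde{\mathcal{A}}$ over $\mathbb{Z}$. Further, the lift can be chosen so that $\tilde{\mathcal{A}}$ has no torsion in its homology or cohomology and has the same Betti numbers as $\mathcal{A}$, i.e. $H_j(\tilde{\mathcal{A}})$ and $H^j(\tilde{\mathcal{A}})$ are both isomorphic to $\mathbb{Z}^{b_j(\mathcal{A})}$, where $b_j(\mathcal{A})$ are the $\mathbb{F}_2$ Betti numbers of $\mathcal{A}$.
   Context: A chain complex $\mathcal{A}$ over $\mathbb{F}_2$ consists of finite-dimensional vector spaces $\mathcal{A}_j$ with preferred bases and boundary maps $\partial_j:\mathcal{A}_j\to\mathcal{A}_{j-1}$ (matrices with entries in $\{0,1\}$) with $\partial_{j}\partial_{j+1}=0$. A lift is a chain complex over $\mathbb{Z}$ on free modules with the same bases, given by integer matrices $\tilde\partial_j$ of the same sizes with each entry congruent mod $2$ to the corresponding entry of $\partial_j$, satisfying $\tilde\partial_j\tilde\partial_{j+1}=0$ over $\mathbb{Z}$. *)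

From HB Require Import structures.
From mathcomp Require Import all_boot all_order all_algebra.
Set Implicit Arguments. Unset Strict Implicit. Unset Printing Implicit Defensive.
Import Order.TTheory GRing.Theory Num.Theory.
Local Open Scope ring_scope.

(* A chain complex over a ring R (with preferred bases) is
   indexed by j : int, with A_j = R^(n j) (column vectors) and the boundary
   map  A_(j+1) -> A_j  given by the matrix  d j : 'M_(n j, n (j+1)),
   acting on column vectors x |-> d j *m x.  So "d j" is the paper's
   \partial_{j+1}. *)

Definition chain_complex (R : pzRingType) (n : int -> nat)
  (d : forall j : int, 'M[R]_(n j, n (j + 1))) : Prop :=
  forall j : int, d j *m d (j + 1) = 0.

Definition mod2_mx (p q : nat) (M : 'M[int]_(p, q)) : 'M['F_2]_(p, q) :=
  map_mx (fun z : int => z%:~R) M.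

Definition is_lift (n : int -> nat)
  (d : forall j : int, 'M['F_2]_(n j, n (j + 1)))
  (D : forall j : int, 'M[int]_(n j, n (j + 1))) : Prop :=
  (forall j : int, mod2_mx (D j) = d j) /\ chain_complex D.

(* For integer matrices A : Z^q -> Z^p and B : Z^r -> Z^q (acting on
   column vectors), the quotient group  ker A / im B  is isomorphic to Z^b:
   there is a group homomorphism phi from ker A onto Z^b whose kernel is
   exactly im B (first isomorphism theorem). *)
Definition quot_iso_Zpow (p q r : nat) (A : 'M[int]_(p, q)) (B : 'M[int]_(q, r))
  (b : nat) : Prop :=
  exists phi : 'cV[int]_q -> 'cV[int]_b,
    [/\ forall x y : 'cV[int]_q, A *m x = 0 -> A *m y = 0 ->
          phi (x + y) = phi x + phi y,
        forall x : 'cV[int]_q, A *m x = 0 ->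
          (phi x = 0 <-> exists y : 'cV[int]_r, x = B *m y)
      & forall z : 'cV[int]_b, exists x : 'cV[int]_q, A *m x = 0 /\ phi x = z].

(* Homology of an integer complex in degree j+1 (paper's indexing):
   H_(j+1) = ker \partial_(j+1) / im \partial_(j+2) = ker (D j) / im (D (j+1)). *)
Definition homology_iso_Zpow (n : int -> nat)
  (D : forall j : int, 'M[int]_(n j, n (j + 1))) (j : int) (b : nat) : Prop :=
  quot_iso_Zpow (D j) (D (j + 1)) b.

(* Cohomology in degree j+1: coboundaries are the transposes,
   H^(j+1) = ker (\partial_(j+2))^T / im (\partial_(j+1))^T
           = ker (D (j+1))^T / im (D j)^T. *)
Definition cohomology_iso_Zpow (n : int -> nat)
  (D : forall j : int, 'M[int]_(n j, n (j + 1))) (j : int) (b : nat) : Prop :=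
  quot_iso_Zpow (D (j + 1))^T (D j)^T b.

(* F_2 Betti number in degree j+1: dim ker \partial_(j+1) - dim im \partial_(j+2).
   The kernel {x | d j *m x = 0} of the column action is the row space of
   kermx (d j)^T. *)
Definition betti2 (n : int -> nat)
  (d : forall j : int, 'M['F_2]_(n j, n (j + 1))) (j : int) : nat :=
  let rk_out := \rank (kermx (d j)^T) in
  let rk_in := \rank (d (j + 1)) in (rk_out - rk_in)%N.

From HB Require Import structures.
From mathcomp Require Import all_boot all_order all_algebra.
From mathcomp Require Import fingroup perm zify.
Import Order.TTheory GRing.Theory Num.Theory.
Set Implicit Arguments. Unset Strict Implicit. Unset Printing Implicit Defensive.
Local Open Scope ring_scope.

(* Over F_2 each chain group splits as the boundaries, a complement of the
   boundaries in the cycles, and a complement of the cycles.  In bases adapted to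
   these splittings every boundary map becomes the standard 0/1 matrix [std_mx],
   which sends the last rank-many basis vectors onto the first ones.  The changes
   of basis lift to GL_n(Z) through an LUP decomposition (its triangular factors
   have unit diagonal over F_2), and conjugating the standard matrices by the lifts
   gives an integral complex reducing to the given one.  In each degree the standard
   complex retracts by a chain homotopy onto Z^b, b the Betti number; retractions
   survive conjugation and transposition, whence homology and cohomology. *)

Section WindowMatrices.
Variable R : pzRingType.

Lemma sum_indicator (I : finType) (P : pred I) :
  (forall k k', P k -> P k' -> k = k') -> \sum_(k : I) (P k)%:R = [exists k, P k]%:R :> R.
Proof.
move=> uniqP; case: existsP => [[k0 Pk0] | noP].
  rewrite (bigD1 k0) //= Pk0 big1 ?addr0 // => k nk.
  by case Pk: (P k); rewrite // (uniqP _ _ Pk Pk0) eqxx in nk.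
by rewrite big1 // => k _; case Pk: (P k); last done; case: noP; exists k.
Qed.

Lemma mul_indicator_mx m n p (P : 'I_m -> 'I_n -> bool) (Q : 'I_n -> 'I_p -> bool) :
  (forall i k k', P i k -> P i k' -> k = k') ->
  \matrix_(i, k) (P i k)%:R *m \matrix_(k, l) (Q k l)%:R
    = \matrix_(i, l) [exists k, P i k && Q k l]%:R :> 'M[R]_(m, p).
Proof.
move=> uniqP; apply/matrixP => i l; rewrite !mxE -sum_indicator.
  by apply: eq_bigr => k _; rewrite !mxE -natrM mulnb.
by move=> k k' /andP[Pk _] /andP[Pk' _]; apply: uniqP Pk Pk'.
Qed.

Definition window_mx m n (o r : nat) : 'M[R]_(m, n) :=
  \matrix_(i, k) ((i < r)%N && (k == (o + i)%N :> nat))%:R.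

Definition std_mx m n r : 'M[R]_(m, n) := window_mx m n (n - r) r.

Lemma window_col_uniq m n (o r : nat) (i : 'I_m) (k k' : 'I_n) :
  (i < r)%N && (k == (o + i)%N :> nat) -> (i < r)%N && (k' == (o + i)%N :> nat) -> k = k'.
Proof. by move=> /andP[_ /eqP ?] /andP[_ /eqP ?]; apply: val_inj => /=; lia. Qed.

Lemma window_row_uniq m n (o r : nat) (k : 'I_n) (i i' : 'I_m) :
  (i < r)%N && (k == (o + i)%N :> nat) -> (i' < r)%N && (k == (o + i')%N :> nat) -> i = i'.
Proof. by move=> /andP[_ /eqP ?] /andP[_ /eqP ?]; apply: val_inj => /=; lia. Qed.

Lemma tr_window_mx m n o r :
  (window_mx m n o r)^T = \matrix_(k, i) ((i < r)%N && (k == (o + i)%N :> nat))%:R.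
Proof. by apply/matrixP => k i; rewrite !mxE. Qed.

Lemma window_mul_tr_disjoint m m' n o o' r r' :
  (o + r <= o')%N || (o' + r' <= o)%N ->
  window_mx m n o r *m (window_mx m' n o' r')^T = 0.
Proof.
move=> disj; rewrite tr_window_mx mul_indicator_mx; last exact: window_col_uniq.
apply/matrixP => i l; rewrite !mxE; case: existsP => // [[k]].
by case/andP => /andP[? /eqP ?] /andP[? /eqP ?]; lia.
Qed.

Lemma window_mul_disjoint m n p o o' r r' :
  (r' <= o)%N -> window_mx m n o r *m window_mx n p o' r' = 0.
Proof.
move=> disj; rewrite mul_indicator_mx; last exact: window_col_uniq.
apply/matrixP => i l; rewrite !mxE; case: existsP => // [[k]].
by case/andP => /andP[? /eqP ?] /andP[? /eqP ?]; lia.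
Qed.

Lemma window_mul_tr m n o r :
  (o + r <= n)%N -> window_mx m n o r *m (window_mx m n o r)^T = pid_mx r.
Proof.
move=> orn; rewrite tr_window_mx mul_indicator_mx; last exact: window_col_uniq.
apply/matrixP => i i'; rewrite !mxE; congr (nat_of_bool _)%:R; apply/existsP/andP.
  by case=> k /andP[/andP[? /eqP ?] /andP[? /eqP ?]]; split; [apply/eqP|]; lia.
case=> /eqP ii' ir; have lt : (o + i < n)%N by lia.
by exists (Ordinal lt); rewrite /= -ii' ir eqxx.
Qed.

Lemma tr_window_mul m n o r :
  (r <= m)%N -> (window_mx m n o r)^T *m window_mx m n o r
    = \matrix_(k, k') ((k == k' :> nat) && (o <= k < o + r)%N)%:R.
Proof.
move=> rm; rewrite tr_window_mx mul_indicator_mx; last exact: window_row_uniq.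
apply/matrixP => k k'; rewrite !mxE; congr (nat_of_bool _)%:R; apply/existsP/andP.
  by case=> i /andP[/andP[? /eqP ?] /andP[? /eqP ?]]; split; [apply/eqP|]; lia.
case=> /eqP kk' /andP[ok kr]; have lt : (k - o < m)%N by lia.
by exists (Ordinal lt); rewrite /= -kk' andbb subnKC ?eqxx ?andbT //; lia.
Qed.

Lemma tr_window_mul_prefix m n o r :
  (r <= m)%N -> (window_mx r m 0 r)^T *m window_mx r n o r = window_mx m n o r.
Proof.
move=> rm; rewrite tr_window_mx mul_indicator_mx; last exact: window_row_uniq.
apply/matrixP => i l; rewrite !mxE; congr (nat_of_bool _)%:R; apply/existsP/andP.
  by case=> k /andP[/andP[? /eqP ?] /andP[? /eqP ?]]; split; [|apply/eqP]; lia.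
by case=> ir /eqP li; exists (Ordinal ir); rewrite /= ir li !eqxx.
Qed.

End WindowMatrices.

(* [(E, F)] exhibits R^b as a deformation retract of the middle term of
   R^s --B--> R^q --A--> R^p, with chain homotopy [(G, K)]. *)
Definition contraction (R : pzRingType) p q s b (A : 'M[R]_(p, q)) (B : 'M[R]_(q, s))
    (E : 'M[R]_(b, q)) (F : 'M[R]_(q, b)) (G : 'M[R]_(s, q)) (K : 'M[R]_(q, p)) :=
  [/\ A *m F = 0, E *m B = 0, E *m F = 1%:M & F *m E + B *m G + K *m A = 1%:M].

Lemma contraction_tr (R : comPzRingType) p q s b (A : 'M[R]_(p, q)) (B : 'M[R]_(q, s))
    (E : 'M[R]_(b, q)) (F : 'M[R]_(q, b)) (G : 'M[R]_(s, q)) (K : 'M[R]_(q, p)) :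
  contraction A B E F G K -> contraction B^T A^T F^T E^T K^T G^T.
Proof.
case=> AF EB EF htpy; split; rewrite -!trmx_mul ?AF ?EB ?EF ?trmx0 ?trmx1 //.
by rewrite -[RHS]trmx1 -htpy !raddfD /= !trmx_mul addrAC.
Qed.

Lemma contraction_conj (R : comUnitRingType) p q s b (A : 'M[R]_(p, q)) (B : 'M[R]_(q, s))
    (E : 'M[R]_(b, q)) (F : 'M[R]_(q, b)) (G : 'M[R]_(s, q)) (K : 'M[R]_(q, p))
    (P : 'M[R]_p) (S : 'M[R]_q) (T : 'M[R]_s) :
  P \in unitmx -> S \in unitmx -> T \in unitmx -> contraction A B E F G K ->
  contraction (P *m A *m invmx S) (S *m B *m T) (E *m invmx S) (S *m F)
              (invmx T *m G *m invmx S) (S *m K *m invmx P).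
Proof.
move=> uP uS uT [AF EB EF htpy]; split; rewrite !mulmxA ?mulmxKV //.
- by rewrite -mulmxA AF mulmx0.
- by rewrite EB mul0mx.
rewrite mulmxK // -!mulmxDl -!(mulmxA S) -!mulmxDr htpy.
by rewrite mulmx1 mulmxV.
Qed.

Lemma contraction_quot_iso p q s b (A : 'M[int]_(p, q)) (B : 'M[int]_(q, s))
    (E : 'M[int]_(b, q)) (F : 'M[int]_(q, b)) (G : 'M[int]_(s, q)) (K : 'M[int]_(q, p)) :
  contraction A B E F G K -> quot_iso_Zpow A B b.
Proof.
case=> AF EB EF htpy; exists (mulmx E); split.
- by move=> x y _ _; rewrite mulmxDr.
- move=> x Ax; split=> [Ex | [y ->]]; last by rewrite mulmxA EB mul0mx.
  exists (G *m x); rewrite -[LHS]mul1mx -htpy !mulmxDl -!mulmxA Ex Ax !mulmx0.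
  by rewrite add0r addr0.
- by move=> z; exists (F *m z); rewrite !mulmxA AF EF mul0mx mul1mx.
Qed.

Lemma std_contraction (R : pzRingType) p q s r t :
  (r <= p)%N -> (t <= s)%N -> (r + t <= q)%N ->
  let E := window_mx R (q - r - t) q t (q - r - t) in
  contraction (std_mx R p q r) (std_mx R q s t) E E^T
              (std_mx R q s t)^T (std_mx R p q r)^T.
Proof.
move=> rp ts rtq E; split.
- by rewrite window_mul_tr_disjoint //; apply/orP; right; lia.
- by rewrite window_mul_disjoint.
- by rewrite window_mul_tr ?pid_mx_1 //; lia.
rewrite tr_window_mul // window_mul_tr ?subnK // tr_window_mul //.
apply/matrixP => k k'; rewrite !mxE -!natrD; congr _%:R.
(* the windows [0, t), [t, q - r) and [q - r, q) partition the coordinates *)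
case: (eqVneq k k') => [<- | /negPf kk']; last by rewrite -[(k == k' :> nat)]/(k == k') kk'.
by rewrite eqxx /=; have := ltn_ord k; case: (ltnP k t); case: (leqP (q - r) k); lia.
Qed.

Section AdaptedBasis.
Variables (F : fieldType) (m n p : nat) (Gin : 'M[F]_(m, n)) (Gout : 'M[F]_(n, p)).
Hypothesis GinGout : Gin *m Gout = 0.

Local Notation r := (\rank Gin).
Local Notation s := (\rank Gout).
Local Notation cycles := (kermx Gout).
Local Notation compl := (cycles :\: Gin)%MS.
Local Notation h := (\rank compl).
Local Notation lifts := (row_base Gout *m pinvmx Gout).

(* Rows of [adapted_mx], top to bottom: a basis of the row space of [Gin], a
   complement of it in the left kernel of [Gout], and preimages under [Gout] of
   [row_base Gout]. *)
Definition adapted_mx : 'M[F]_n :=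
  (window_mx F r n 0 r)^T *m row_base Gin + (window_mx F h n r h)^T *m row_base compl
  + (std_mx F s n s)^T *m lifts.

Lemma boundaries_sub_cycles : (Gin <= cycles)%MS.
Proof. exact/sub_kermxP. Qed.

Lemma adapted_dims : (r + h + s = n)%N.
Proof.
have := mxrank_cap_compl cycles Gin; rewrite mxrank_ker.
have /capmx_idPr -> := boundaries_sub_cycles; have := rank_leq_row Gout; lia.
Qed.

Lemma adapted_mx_blocks :
  [/\ window_mx F r n 0 r *m adapted_mx = row_base Gin,
      window_mx F h n r h *m adapted_mx = row_base compl
    & std_mx F s n s *m adapted_mx = lifts].
Proof.
have dims := adapted_dims.
rewrite /adapted_mx !mulmxDr !mulmxA !window_mul_tr ?subnK ?rank_leq_row ?pid_mx_1 ?mul1mx;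
  try lia.
by rewrite !window_mul_tr_disjoint ?mul0mx ?add0r ?addr0 //; apply/orP; lia.
Qed.

Lemma lifts_out : lifts *m Gout = row_base Gout.
Proof. by rewrite mulmxKpV ?eq_row_base. Qed.

Lemma adapted_mx_out : adapted_mx *m Gout = (std_mx F s n s)^T *m row_base Gout.
Proof.
have /sub_kermxP X1out : (row_base Gin <= cycles)%MS.
  by rewrite eq_row_base boundaries_sub_cycles.
have /sub_kermxP X2out : (row_base compl <= cycles)%MS by rewrite eq_row_base diffmxSl.
rewrite /adapted_mx !mulmxDl -!(mulmxA _ (row_base _)) -(mulmxA _ lifts).
by rewrite X1out X2out lifts_out !mulmx0 !add0r.
Qed.

Lemma adapted_mx_unit : adapted_mx \in unitmx.
Proof.
have [top mid bot] := adapted_mx_blocks.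
have rank_lifts : \rank lifts = s.
  apply/eqP; rewrite eqn_leq rank_leq_row /=.
  by have := mxrankM_maxl lifts Gout; rewrite lifts_out eq_row_base.
have cap0 : (cycles :&: lifts = 0)%MS.
  have /sub_kermxP capOut : ((cycles :&: lifts)%MS <= cycles)%MS by exact: capmxSl.
  have /submxP [a capE] : ((cycles :&: lifts)%MS <= lifts)%MS by exact: capmxSr.
  rewrite capE -mulmxA lifts_out in capOut *.
  have -> : a = 0 by apply: (row_free_inj (row_base_free Gout)); rewrite capOut mul0mx.
  by rewrite mul0mx.
have rank_sum : \rank (cycles + lifts)%MS = n.
  have := mxrank_sum_cap cycles lifts; rewrite cap0 mxrank0 rank_lifts mxrank_ker.
  have := rank_leq_row Gout; lia.
have cycles_sub : (cycles <= adapted_mx)%MS.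
  rewrite -(addsmx_diff_cap_eq cycles Gin) addsmx_sub.
  rewrite -(eq_row_base compl) -mid submxMl /=.
  by rewrite (submx_trans (capmxSr _ _)) // -(eq_row_base Gin) -top submxMl.
rewrite -row_full_unit /row_full eqn_leq rank_leq_col -{1}rank_sum mxrankS //.
by rewrite addsmx_sub cycles_sub -bot submxMl.
Qed.

End AdaptedBasis.

Lemma mod2_mxM m n p (A : 'M[int]_(m, n)) (B : 'M[int]_(n, p)) :
  mod2_mx (A *m B) = mod2_mx A *m mod2_mx B.
Proof. exact: map_mxM. Qed.

Lemma F2_neq0_eq1 (x : 'F_2) : x != 0 -> x = 1.
Proof. by case: x => [[|[|k]] lt2] //= _; apply/val_inj. Qed.

Definition lift_F2_mx m n (M : 'M['F_2]_(m, n)) : 'M[int]_(m, n) :=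
  map_mx (fun x : 'F_2 => (x : nat)%:Z) M.

Lemma mod2_lift_F2_mx m n (M : 'M['F_2]_(m, n)) : mod2_mx (lift_F2_mx M) = M.
Proof. by apply/matrixP => i j; rewrite !mxE; case: (M i j) => [[|[|k]] lt2] //; apply/val_inj. Qed.

Lemma det_lift_F2_trig n (T : 'M['F_2]_n) :
  is_trig_mx T -> T \in unitmx -> \det (lift_F2_mx T) = 1.
Proof.
move=> Ttrig; rewrite unitmxE unitfE det_trig // => /prodf_neq0 diag_neq0.
rewrite det_trig; last by apply/is_trig_mxP => i j ij; rewrite mxE (is_trig_mxP Ttrig).
by rewrite big1 // => i _; rewrite mxE (F2_neq0_eq1 (diag_neq0 i isT)).
Qed.

Lemma lift_F2_unitmx n (A : 'M['F_2]_n) :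
  A \in unitmx -> exists Q : 'M[int]_n, (Q \in unitmx) && (mod2_mx Q == A).
Proof.
case: n A => [|n] A uA.
  by exists 1%:M; rewrite unitmx1; apply/eqP/matrixP => [[]].
have := cormen_lup_correct A; have := cormen_lup_perm A; have := cormen_lup_detL A.
have := cormen_lup_lower A; have := cormen_lup_upper A.
case: cormen_lup => [[P L] U] /= Uup Llow detL /is_perm_mxP [s ->] PA.
have {}PA : perm_mx s *m A = L *m U by [].
have Ltrig : is_trig_mx L.
  by apply/is_trig_mxP => i j ij; rewrite Llow ?(ltnW ij) //; case: eqP ij => // ->; rewrite ltnn.
have UTtrig : is_trig_mx U^T by apply/is_trig_mxP => i j ij; rewrite mxE Uup.
have uU : U \in unitmx.
  have : L *m U \in unitmx by rewrite -PA unitmx_mul unitmx_perm uA.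
  by rewrite unitmx_mul => /andP[].
exists (perm_mx (s^-1)%g *m lift_F2_mx L *m lift_F2_mx U); apply/andP; split.
  rewrite !unitmx_mul unitmx_perm !unitmxE det_lift_F2_trig ?unitmxE ?detL ?unitr1 //.
  by rewrite -det_tr map_trmx det_lift_F2_trig ?unitmx_tr ?unitr1.
rewrite !mod2_mxM !mod2_lift_F2_mx /mod2_mx map_perm_mx -mulmxA -PA mulmxA.
by rewrite -perm_mxM mulVg perm_mx1 mul1mx.
Qed.

Lemma mod2_window_mx m n o r : mod2_mx (window_mx _ m n o r) = window_mx _ m n o r.
Proof. by apply/matrixP => i k; rewrite !mxE; case: (_ && _). Qed.

(* [n (k - 1 + 1)] and [n k] are not convertible, so a family indexed by
   successors is transported to all degrees with [castmx]. *)
Section ShiftedFamilies.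
Variables (R : Type) (n : int -> nat).

Definition unshift (M : forall i : int, 'M[R]_(n (i + 1))) (k : int) : 'M[R]_(n k) :=
  castmx (congr1 n (subrK 1 k), congr1 n (subrK 1 k)) (M (k - 1)).

Lemma unshiftS M j : unshift M (j + 1) = M j.
Proof.
rewrite /unshift; move: (subrK 1 (j + 1)); rewrite (addrK 1 j) => e.
by rewrite (eq_irrelevance e erefl) castmx_id.
Qed.

Lemma unshift_ind (P : forall k, 'M[R]_(n k) -> Prop) M :
  (forall i, P (i + 1) (M i)) -> forall k, P k (unshift M k).
Proof.
move=> PM k; rewrite /unshift; move: (subrK 1 k); move: (k - 1) => i e.
by case: k / e; rewrite castmx_id.
Qed.

End ShiftedFamilies.

Section IntegralLift.
Variables (n : int -> nat) (d : forall j : int, 'M['F_2]_(n j, n (j + 1))).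
Hypothesis dd0 : chain_complex d.

Lemma dd0_tr i : (d (i + 1))^T *m (d i)^T = 0.
Proof. by rewrite -trmx_mul dd0 trmx0. Qed.

Lemma rank_bd_sum j : (\rank (d j) + \rank (d (j + 1)) <= n (j + 1))%N.
Proof.
have /mxrankS : ((d (j + 1))^T <= kermx (d j)^T)%MS by apply/sub_kermxP; exact: dd0_tr.
by rewrite mxrank_ker !mxrank_tr; have := rank_leq_col (d j); lia.
Qed.

Definition adapted_basis_succ i : 'M['F_2]_(n (i + 1)) := adapted_mx (d (i + 1))^T (d i)^T.

Definition adapted_basis : forall k, 'M['F_2]_(n k) := unshift adapted_basis_succ.

Lemma tr_adapted_basis_unit k : (adapted_basis k)^T \in unitmx.
Proof.
by rewrite unitmx_tr; apply: (unshift_ind (P := fun k X => X \in unitmx)) => i;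
  exact: adapted_mx_unit (dd0_tr i).
Qed.

Lemma adapted_basis_prefix k :
  let r := \rank (d k)^T in window_mx _ r (n k) 0 r *m adapted_basis k = row_base (d k)^T.
Proof.
apply: (unshift_ind (P := fun k X => window_mx _ _ _ 0 _ *m X = row_base (d k)^T)) => i.
by have [] := adapted_mx_blocks (dd0_tr i).
Qed.

Lemma adapted_basis_out j :
  let r := \rank (d j)^T in
  adapted_basis (j + 1) *m (d j)^T = (std_mx _ r (n (j + 1)) r)^T *m row_base (d j)^T.
Proof. by rewrite /adapted_basis unshiftS (adapted_mx_out (dd0_tr j)). Qed.

Lemma bd_normal_form j :
  d j *m (adapted_basis (j + 1))^T
    = (adapted_basis j)^T *m std_mx _ (n j) (n (j + 1)) (\rank (d j)).
Proof.
apply: trmx_inj; rewrite !trmx_mul !trmxK adapted_basis_out -adapted_basis_prefix mulmxA.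
rewrite -[\rank (d j)]mxrank_tr; congr (_ *m _); apply: trmx_inj.
by rewrite trmx_mul !trmxK tr_window_mul_prefix ?rank_leq_col.
Qed.

Definition int_basis k : 'M[int]_(n k) := xchoose (lift_F2_unitmx (tr_adapted_basis_unit k)).

Lemma int_basisP k :
  (int_basis k \in unitmx) && (mod2_mx (int_basis k) == (adapted_basis k)^T).
Proof. exact: (xchooseP (lift_F2_unitmx (tr_adapted_basis_unit k))). Qed.

Lemma int_basis_unit k : int_basis k \in unitmx.
Proof. by case/andP: (int_basisP k). Qed.

Definition int_lift j : 'M[int]_(n j, n (j + 1)) :=
  int_basis j *m std_mx _ (n j) (n (j + 1)) (\rank (d j)) *m invmx (int_basis (j + 1)).

Lemma int_lift_mod2 j : mod2_mx (int_lift j) = d j.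
Proof.
have /andP[_ /eqP Pj] := int_basisP j; have /andP[_ /eqP Pj1] := int_basisP (j + 1).
rewrite !mod2_mxM Pj mod2_window_mx -bd_normal_form -Pj1 -mulmxA -mod2_mxM.
by rewrite mulmxV ?int_basis_unit // /mod2_mx map_mx1 mulmx1.
Qed.

Lemma int_lift_chain : chain_complex int_lift.
Proof.
move=> j; rewrite /int_lift !mulmxA mulmxKV ?int_basis_unit //.
rewrite -(mulmxA (int_basis j)) window_mul_disjoint ?mulmx0 ?mul0mx //.
have := rank_bd_sum j; lia.
Qed.

Lemma int_lift_contraction j :
  exists (E : 'M_(betti2 d j, n (j + 1))) F G K,
    contraction (int_lift j) (int_lift (j + 1)) E F G K.
Proof.
rewrite /betti2 /= mxrank_ker mxrank_tr.
have := std_contraction int (rank_leq_row (d j)) (rank_leq_col (d (j + 1))) (rank_bd_sum j).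
move/(contraction_conj (int_basis_unit j) (int_basis_unit (j + 1))).
move/(_ (invmx (int_basis (j + 1 + 1)))); rewrite unitmx_inv int_basis_unit => c.
by do 4!eexists; exact: c.
Qed.

End IntegralLift.

Theorem mainTheorem8 (n : int -> nat)
  (d : forall j : int, 'M['F_2]_(n j, n (j + 1)))
  (hd : chain_complex d) :
  exists D : forall j : int, 'M[int]_(n j, n (j + 1)),
    [/\ is_lift d D,
        forall j : int, homology_iso_Zpow D j (betti2 d j)
      & forall j : int, cohomology_iso_Zpow D j (betti2 d j)].
Proof.
exists (int_lift hd); split.
- by split; [exact: int_lift_mod2 | exact: int_lift_chain].
- by move=> j; have [E [F [G [K c]]]] := int_lift_contraction hd j; exact: contraction_quot_iso c.
- move=> j; have [E [F [G [K c]]]] := int_lift_contraction hd j.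
  exact: contraction_quot_iso (contraction_tr c).
Qed.
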